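(* For all $p\in(0,1)$ and $n\ge0$, $\mathbb P^{\mathrm{aon}}_p[o\rightsquigarrow\partial B_{n+1}]=\mathbb P''_p[o\leftrightsquigarrow\partial B_n]$. Consequently $\mathbb P''_p[o\leftrightsquigarrow\infty]=\mathbb P^{\mathrm{aon}}_p[o\rightsquigarrow\infty]\le \mathbb P_p[o\rightsquigarrow\infty]=\mathbb P'_p[o\leftrightsquigarrow\infty]$.
   Context: On $\mathbb Z^d$, $B_n=\{x:\|x\|_1\le n\}$, $\partial B_n=B_{n+1}\setminus B_n$. $\mathbb P^{\mathrm{aon}}_p$: independently, each vertex $u$ opens directed edges to all its $2d$ nearest neighbors with probability $p$ and to none with probability $1-p$. $\mathbb P_p$: each directed nearest-neighbor edge is open independently with probability $p$. For these directed models, $\{o\rightsquigarrow\partial B_n\}$ is the event that a path of open directed edges leads from $o$ to $\partial B_n$, and $\{o\rightsquigarrow\infty\}$ the event that infinitely many vertices are reachable from $o$ by such paths. $\mathbb P''_p$ is i.i.d. site percolation (each vertex open independently with probability $p$); under it $\{o\leftrightsquigarrow\partial B_n\}$ is the event that there is a nearest-neighbor path from $o$ to a vertex of $\partial B_n$ all of whose vertices (including $o$ and the endpoint) are open, and $\{o\leftrightsquigarrow\infty\}$ that the open cluster of $o$ is infinite. $\mathbb P'_p$ is undirected Bernoulli bond percolation with parameter $p$ and $\{o\leftrightsquigarrow\infty\}$ the event that the open cluster of $o$ is infinite. *)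

From HB Require Import structures.
From mathcomp Require Import all_boot all_order all_algebra.
From mathcomp Require Import all_classical all_reals all_analysis.
Set Implicit Arguments. Unset Strict Implicit. Unset Printing Implicit Defensive.
Import Order.TTheory GRing.Theory Num.Theory.
Local Open Scope classical_set_scope.
Local Open Scope ring_scope.

Definition V (d : nat) := 'I_d -> int.

Definition origin (d : nat) : V d := fun _ => 0%Z.
Arguments origin : clear implicits.

Definition norm1 (d : nat) (x : V d) : nat := (\sum_(i < d) `|x i|)%N.

(* B_n = {x : |x|_1 <= n};  dB_n = B_{n+1} \ B_n = {x : |x|_1 = n+1} *)
Definition ball1 (d n : nat) : set (V d) := [set x | (@norm1 d x <= n)%N].
Arguments ball1 : clear implicits.
Definition bdry (d n : nat) : set (V d) := ball1 d n.+1 `\` ball1 d n.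
Arguments bdry : clear implicits.

Definition shift (d : nat) (x : V d) (i : 'I_d) (b : bool) : V d :=
  fun j => if j == i then x j + (if b then 1 else -1)%R else x j.

Fixpoint chain (T : Type) (E : T -> T -> Prop) (x : T) (s : seq T) : Prop :=
  match s with
  | [::] => True
  | y :: s' => E x y /\ chain E y s'
  end.

Definition reaches (T : Type) (E : T -> T -> Prop) (x : T) (A : set T) : Prop :=
  exists s : seq T, chain E x s /\ A (last x s).

Definition reachset (T : Type) (E : T -> T -> Prop) (x : T) : set T :=
  [set y | reaches E x (eq y)].

(* An i.i.d. family of Bernoulli(p) random variables (true = open):
   each event {X i = true} is measurable and for any finitely many distinct
   indices the product rule holds. *)
Definition iid_bernoulli (R : realType) (dT : measure_display)
  (T : measurableType dT) (P : probability T R) (I : Type)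
  (X : I -> T -> bool) (p : R) : Prop :=
  (forall i, measurable [set w | X i w]) /\
  (forall (n : nat) (f : 'I_n -> I) (b : 'I_n -> bool), injective f ->
     P [set w | forall k, X (f k) w = b k] =
     (\prod_(k < n) (if b k then p else 1 - p))%:E).

(* all-or-none: vertex u opens all 2d outgoing directed edges when X u *)
Definition aon_edge (d : nat) (T : Type) (X : V d -> T -> bool) (w : T)
  (x y : V d) : Prop := X x w /\ exists i b, y = shift x i b.

(* directed Bernoulli bond: directed edge (x, x +- e_i) indexed by (x,i,b) *)
Definition dir_edge (d : nat) (T : Type) (Y : V d * 'I_d * bool -> T -> bool)
  (w : T) (x y : V d) : Prop := exists i b, y = shift x i b /\ Y (x, i, b) w.

(* site percolation: a step to y requires y open (o open required separately) *)
Definition site_edge (d : nat) (T : Type) (X : V d -> T -> bool) (w : T)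
  (x y : V d) : Prop := (exists i b, y = shift x i b) /\ X y w.

(* undirected Bernoulli bond: undirected edge {x, x + e_i} indexed by (x,i) *)
Definition bond_edge (d : nat) (T : Type) (Z : V d * 'I_d -> T -> bool)
  (w : T) (x y : V d) : Prop :=
  exists i, (y = shift x i true /\ Z (x, i) w) \/ (x = shift y i true /\ Z (y, i) w).

Definition aon_reach d T (X : V d -> T -> bool) (A : set (V d)) : set T :=
  [set w | reaches (aon_edge X w) (origin d) A].
Definition aon_inf d T (X : V d -> T -> bool) : set T :=
  [set w | ~ finite_set (reachset (aon_edge X w) (origin d))].

Definition dir_inf d T (Y : V d * 'I_d * bool -> T -> bool) : set T :=
  [set w | ~ finite_set (reachset (dir_edge Y w) (origin d))].

Definition site_reach d T (X : V d -> T -> bool) (A : set (V d)) : set T :=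
  [set w | X (origin d) w /\ reaches (site_edge X w) (origin d) A].
(* open cluster of o (empty if o is closed) *)
Definition site_cluster d T (X : V d -> T -> bool) (w : T) : set (V d) :=
  [set y | X (origin d) w /\ reaches (site_edge X w) (origin d) (eq y)].
Definition site_inf d T (X : V d -> T -> bool) : set T :=
  [set w | ~ finite_set (site_cluster X w)].

Definition bond_inf d T (Z : V d * 'I_d -> T -> bool) : set T :=
  [set w | ~ finite_set (reachset (bond_edge Z w) (origin d))].

(* Each crossing event is decided inside a finite ball, and the probability of
   reaching [bdry d n] is computed by exploring the cluster of the origin:
   conditionally on the coordinates that decide which unexplored vertices are
   entered from the explored set, the rest of the exploration only uses fresh
   coordinates inside a strictly smaller window ([crossing_prob_rec]).  The models
   are compared step by step along this recursion.  Given the explored set, a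
   target vertex set is entered in all-or-none percolation with probability
   [1 - (1 - p) ^ k], [k] the number of explored vertices next to it, and in
   directed bond percolation with probability [1 - (1 - p) ^ m], [m >= k] the
   number of edges into it; directed and undirected bond percolation explore
   through the same edges, each crossed only in its outward direction.
   All-or-none reachability of [bdry d n.+1] is, configuration by configuration,
   open-site reachability of [bdry d n], and infinite clusters are handled by
   continuity of the measure along the decreasing crossing events. *)

From HB Require Import structures.
From mathcomp Require Import all_boot all_order all_algebra.
From mathcomp Require Import all_classical all_reals all_analysis.
From mathcomp Require Import ring zify.
Import Order.TTheory GRing.Theory Num.Theory.

Set Implicit Arguments. Unset Strict Implicit. Unset Printing Implicit Defensive.
Local Open Scope ring_scope.

Section BernoulliMean.
Variables (R : realFieldType) (p : R).

Section OneIndexType.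
Variable I : eqType.
Implicit Types (J K : seq I) (c : I -> bool) (F G : (I -> bool) -> R).

Definition update c j b : I -> bool := fun i => if i == j then b else c i.

(* [bmean J F c] is the mean of [F] when the coordinates listed in [J] are
   resampled as independent Bernoulli(p) bits and the others are read off [c]. *)
Fixpoint bmean J F c : R :=
  if J is j :: J' then
    p * bmean J' F (update c j true) + (1 - p) * bmean J' F (update c j false)
  else F c.

Definition depends_on K F := forall c c', (forall i, i \in K -> c i = c' i) -> F c = F c'.

Lemma eq_bmean J F G c : (forall c, F c = G c) -> bmean J F c = bmean J G c.
Proof. by move=> FG; elim: J c => [|j J IH] c /=; rewrite ?FG ?IH. Qed.

Lemma eq_bmean_outside J F G c :
  (forall c', (forall i, i \notin J -> c' i = c i) -> F c' = G c') ->
  bmean J F c = bmean J G c.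
Proof.
elim: J c => [|j J IH] c FG /=; first exact: FG.
by congr (_ * _ + _ * _); apply: IH => c' c'E; apply: FG => i;
  rewrite inE negb_or => /andP[ij iJ]; rewrite c'E // /update (negbTE ij).
Qed.

Lemma bmean_depends K J F c c' : depends_on K F ->
  (forall i, i \in K -> i \notin J -> c i = c' i) -> bmean J F c = bmean J F c'.
Proof.
move=> dF; elim: J c c' => [|j J IH] c c' cc' /=.
  by apply: dF => i iK; apply: cc'.
by congr (_ * _ + _ * _); apply: IH => i iK iJ; rewrite /update;
  case: eqP => // /eqP ij; apply: cc'; rewrite // inE negb_or ij.
Qed.

Lemma bmean_outside J F c c' : (forall i, i \notin J -> c i = c' i) ->
  bmean J F c = bmean J F c'.
Proof.
elim: J c c' => [|j J IH] c c' cc' /=; first by congr F; apply: funext => i; apply: cc'.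
by congr (_ * _ + _ * _); apply: IH => i iJ; rewrite /update;
  case: eqP => // /eqP ij; apply: cc'; rewrite // inE negb_or ij.
Qed.

Lemma bmean_const J a c : bmean J (fun _ => a) c = a.
Proof. by elim: J c => [|j J IH] c //=; rewrite !IH; ring. Qed.

Lemma bmean_lin J F G a b c :
  bmean J (fun c => a * F c + b * G c) c = a * bmean J F c + b * bmean J G c.
Proof. by elim: J c => [|j J IH] c //=; rewrite !IH; ring. Qed.

Lemma ler_bmean J F G c : 0 <= p -> p <= 1 -> (forall c, F c <= G c) ->
  bmean J F c <= bmean J G c.
Proof.
move=> p0 p1 FG; elim: J c => [|j J IH] c //=.
by apply: lerD; apply: ler_wpM2l; rewrite ?subr_ge0 ?IH.
Qed.

Lemma bmean_cat J1 J2 F c : bmean (J1 ++ J2) F c = bmean J1 (bmean J2 F) c.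
Proof. by elim: J1 c => [|j J1 IH] c //=; rewrite !IH. Qed.

Lemma bmean_cons_mem j J F c : j \in J -> bmean (j :: J) F c = bmean J F c.
Proof.
move=> jJ /=.
rewrite (@bmean_outside J F (update c j true) c) ?(@bmean_outside J F (update c j false) c);
  first by ring.
all: by move=> i iJ; rewrite /update; case: eqP => // ij; move: iJ; rewrite ij jJ.
Qed.

Lemma bmean_cons_irrelevant K j J F c : depends_on K F -> j \notin K ->
  bmean (j :: J) F c = bmean J F c.
Proof.
move=> dF jK /=.
rewrite (@bmean_depends K J F (update c j true) c)
  ?(@bmean_depends K J F (update c j false) c) //; first by ring.
all: by move=> i iK _; rewrite /update; case: eqP => // ij; rewrite -ij iK in jK.
Qed.

Lemma update_comm c j1 j2 b1 b2 : j1 != j2 ->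
  update (update c j1 b1) j2 b2 = update (update c j2 b2) j1 b1.
Proof.
move=> ne; apply: funext => i; rewrite /update.
case: (i =P j2) => [e2|]; case: (i =P j1) => [e1|] //.
by move: ne; rewrite -e1 -e2 eqxx.
Qed.

Lemma bmean_swap j1 j2 J F c :
  bmean [:: j1, j2 & J] F c = bmean [:: j2, j1 & J] F c.
Proof. by case: (eqVneq j1 j2) => [->//|ne] /=; rewrite !(update_comm _ _ _ ne); ring. Qed.

Lemma bmean_cons_cat j J1 J2 F c :
  bmean (j :: J1 ++ J2) F c = bmean (J1 ++ j :: J2) F c.
Proof.
elim: J1 c => [|k J1 IH] c //=.
by rewrite -!IH; have /= -> := bmean_swap j k (J1 ++ J2) F c.
Qed.

Lemma perm_bmean J J' F c : perm_eq J J' -> bmean J F c = bmean J' F c.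
Proof.
elim: J J' c => [|j J IH] J' c; first by move/perm_size; case: J'.
move=> pe; have jJ' : j \in J' by rewrite -(perm_mem pe) mem_head.
move: pe; case/splitPr: jJ' => J2 J3 pe.
have pe' : perm_eq J (J2 ++ J3).
  by rewrite -(perm_cons j); apply: perm_trans pe _; rewrite -cat1s perm_catCA.
by rewrite -bmean_cons_cat /= !(IH _ _ pe').
Qed.

Lemma bmean_filter K J F c : depends_on K F ->
  bmean J F c = bmean [seq j <- J | j \in K] F c.
Proof.
move=> dF; elim: J c => [|j J IH] c //=.
case: ifP => jK /=; first by rewrite !IH.
by rewrite -IH -(@bmean_cons_irrelevant K j J F c) ?jK.
Qed.

Lemma bmean_undup J F c : bmean J F c = bmean (undup J) F c.
Proof.
elim: J c => [|j J IH] c //; rewrite [undup _]/= .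
by case: ifP => jJ; [rewrite bmean_cons_mem|rewrite /= !IH].
Qed.

Lemma bmean_support K J J' F c c' : depends_on K F ->
  {subset K <= J} -> {subset K <= J'} -> bmean J F c = bmean J' F c'.
Proof.
move=> dF KJ KJ'.
rewrite (bmean_filter J c dF) (bmean_filter J' c' dF) bmean_undup (bmean_undup _ _ c').
set L := undup _; set L' := undup _.
have pe : perm_eq L L'.
  apply: uniq_perm; rewrite ?undup_uniq // => x.
  by rewrite !mem_undup !mem_filter; apply/andP/andP => -[xK _]; split => //;
    [exact: KJ'|exact: KJ].
rewrite (perm_bmean _ _ pe); apply: (bmean_depends dF) => i iK.
by rewrite mem_undup mem_filter iK KJ'.
Qed.

Lemma bmean_hasN J L c : uniq J -> {subset J <= L} ->
  bmean J (fun c => (~~ has c L)%:R) c =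
  (1 - p) ^+ size J * (~~ has c [seq l <- L | l \notin J])%:R.
Proof.
elim: J c => [|j J IH] c /=; first by rewrite expr0 mul1r filter_predT.
move=> /andP[jJ uJ] sub.
have subJ : {subset J <= L} by move=> x xJ; apply: sub; rewrite inE xJ orbT.
rewrite !IH //.
have -> : has (update c j true) [seq l <- L | l \notin J].
  by apply/hasP; exists j; rewrite ?mem_filter ?jJ ?sub ?mem_head // /update eqxx.
have -> : has (update c j false) [seq l <- L | l \notin J] =
          has c [seq l <- L | l \notin j :: J].
  apply/hasP/hasP => -[x]; rewrite !mem_filter /update.
    move=> /andP[xJ xL]; case: eqP => // /eqP xj cx; exists x => //.
    by rewrite mem_filter inE negb_or xj xJ xL.
  rewrite inE negb_or => /andP[/andP[xj xJ] xL] cx.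
  by exists x; rewrite ?mem_filter ?xJ ?xL // (negbTE xj).
by rewrite /= mulr0 mulr0 add0r exprS mulrA.
Qed.

Lemma bmean_has J c : uniq J ->
  bmean J (fun c => (has c J)%:R) c = 1 - (1 - p) ^+ size J.
Proof.
move=> uJ; rewrite (@eq_bmean _ _ (fun c => 1 * 1 + (-1) * (~~ has c J)%:R));
  last by move=> c'; case: has => /=; ring.
rewrite bmean_lin bmean_const bmean_hasN // (_ : [seq l <- J | l \notin J] = [::]).
  by rewrite /=; ring.
by apply/eqP; rewrite -[_ == _]negbK -has_filter; apply/hasP => -[x ->].
Qed.

Lemma bmean_has_sub J K c : uniq K -> {subset K <= J} ->
  bmean J (fun c => (has c K)%:R) c = 1 - (1 - p) ^+ size K.
Proof.
move=> uK KJ; rewrite (@bmean_support K J K _ c c) ?bmean_has //.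
by move=> c1 c2 c12; rewrite (@eq_in_has _ c1 c2) // => x /c12 ->.
Qed.

End OneIndexType.

Section TwoIndexTypes.
Variables I1 I2 : eqType.

Lemma bmean_exchange (J1 : seq I1) (J2 : seq I2) H c1 c2 :
  bmean J1 (fun c => bmean J2 (H c) c2) c1 =
  bmean J2 (fun c' => bmean J1 (fun c => H c c') c1) c2.
Proof. by elim: J1 c1 => [|j J1 IH] c1 //=; rewrite !IH -bmean_lin. Qed.

Lemma bmean_transfer (J0 : seq I1) (phi : I1 -> I2) F1 F2 :
  uniq J0 -> {in J0 &, injective phi} ->
  (forall c1 c2, (forall j, j \in J0 -> c1 j = c2 (phi j)) -> F1 c1 = F2 c2) ->
  forall J c1 c2, uniq J -> {subset J <= J0} ->
  (forall j, j \in J0 -> j \notin J -> c1 j = c2 (phi j)) ->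
  bmean J F1 c1 = bmean (map phi J) F2 c2.
Proof.
move=> uJ0 inj F12; elim => [|j J IH] c1 c2 /=.
  by move=> _ _ c12; apply: F12 => i iJ; apply: c12.
move=> /andP[jJ uJ] sub c12.
have subJ : {subset J <= J0} by move=> x xJ; apply: sub; rewrite inE xJ orbT.
have j0 : j \in J0 by apply: sub; rewrite mem_head.
congr (_ * _ + _ * _); apply: IH => // i i0 iJ; rewrite /update;
  (case: (eqVneq i j) => [->|ij]; first by rewrite eqxx);
  (have -> : (phi i == phi j) = false by
     apply/negbTE; apply: contra ij => /eqP /inj; move=> /(_ i0 j0) ->);
  by apply: c12 => //; rewrite inE negb_or ij.
Qed.

End TwoIndexTypes.
End BernoulliMean.

Local Open Scope classical_set_scope.

Section BernoulliFamily.
Variables (R : realType) (p : R).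
Variables (dT : measure_display) (T : measurableType dT) (P : probability T R).
Variables (I : eqType) (X : I -> T -> bool).
Hypothesis hX : iid_bernoulli P X p.

Definition cylinder (K : seq I) (c : I -> bool) : set T :=
  [set w | forall k, k \in K -> X k w = c k].

Lemma measurable_cylinder K c : measurable (cylinder K c).
Proof.
have [mX _] := hX.
elim: K => [|k K IH]; first by rewrite (_ : cylinder _ _ = setT) //; apply/seteqP.
have -> : cylinder (k :: K) c = [set w | X k w = c k] `&` cylinder K c.
  apply/seteqP; split => w /=.
    by move=> Xc; split => [|i iK]; apply: Xc; rewrite inE ?eqxx ?iK ?orbT.
  by move=> [Xk XK] i; rewrite inE => /orP[/eqP->//|]; apply: XK.
apply: measurableI => //; case: (c k); first exact: mX.
rewrite (_ : [set w | X k w = false] = ~` [set w | X k w]); first exact: measurableC.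
by apply/seteqP; split => w /=; case: (X k w).
Qed.

Lemma probability_cylinder K c : uniq K ->
  P (cylinder K c) = (\prod_(k <- K) (if c k then p else 1 - p))%:E.
Proof.
move=> uK; have [_ Pprod] := hX.
pose t := tnth (in_tuple K).
have inj : injective t.
  move=> i j; have x0 : I := t i.
  by rewrite /t !(tnth_nth x0) /= => /eqP; rewrite nth_uniq // => /eqP /val_inj.
rewrite (_ : cylinder K c = [set w | forall k, X (t k) w = c (t k)]).
  by rewrite (Pprod _ t (c \o t) inj) (big_tuple _ _ (in_tuple K) predT).
apply/seteqP; split => w /= Xc; first by move=> k; apply/Xc/mem_tnth.
move=> k kK; have /tnthP [i ->] : k \in in_tuple K by [].
exact: Xc.
Qed.

Lemma probability_cylinderI (G : (I -> bool) -> bool) :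
  forall J K c, uniq (J ++ K) -> depends_on (J ++ K) (fun c => (G c)%:R : R) ->
  measurable (cylinder K c `&` [set w | G (X^~ w)]) /\
  P (cylinder K c `&` [set w | G (X^~ w)]) =
  ((\prod_(k <- K) (if c k then p else 1 - p)) * bmean p J (fun c => (G c)%:R) c)%:E.
Proof.
elim => [|j J IH] K c.
  move=> uK dG /=.
  have GX w : cylinder K c w -> G (X^~ w) = G c.
    move/(dG (X^~ w) c) => /=.
    by case: (G _); case: (G c) => //= /eqP; rewrite ?oner_eq0 // eq_sym oner_eq0.
  case Gc : (G c).
    rewrite (_ : _ `&` _ = cylinder K c); last first.
      by apply/seteqP; split => w /=; [case|move=> Kw; split => //; rewrite GX].
    by rewrite probability_cylinder // mulr1; split => //; apply: measurable_cylinder.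
  rewrite (_ : _ `&` _ = set0) ?measure0 ?mulr0 //.
  by apply/seteqP; split => w //= [Kw]; rewrite GX // Gc.
move=> u dG.
have jK : j \notin K.
  by move: u; rewrite cat_cons /= mem_cat negb_or => /andP[/andP[]].
have u' : uniq (J ++ j :: K).
  by rewrite -cat1s (perm_uniq (permEl (perm_catCA J [:: j] K))).
have dG' : depends_on (J ++ j :: K) (fun c => (G c)%:R : R).
  move=> c1 c2 c12; apply: dG => i; rewrite cat_cons inE mem_cat => Hi.
  by apply: c12; rewrite mem_cat inE; move: Hi => /orP[->|/orP[]->]; rewrite ?orbT.
have [m1 e1] := IH (j :: K) (update c j true) u' dG'.
have [m2 e2] := IH (j :: K) (update c j false) u' dG'.
have Kupdate b : \prod_(k <- K) (if update c j b k then p else 1 - p) =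
                 \prod_(k <- K) (if c k then p else 1 - p).
  rewrite big_seq_cond [RHS]big_seq_cond; apply: eq_bigr => k /andP[kK _].
  by rewrite /update; case: eqP => // ekj; move: jK; rewrite -ekj kK.
have cylinder_update b : cylinder (j :: K) (update c j b) `<=` cylinder K c.
  move=> w Kw k kK; rewrite Kw ?inE ?kK ?orbT // /update.
  by case: eqP => // ekj; move: jK; rewrite -ekj kK.
have -> : cylinder K c `&` [set w | G (X^~ w)] =
  (cylinder (j :: K) (update c j true) `&` [set w | G (X^~ w)]) `|`
  (cylinder (j :: K) (update c j false) `&` [set w | G (X^~ w)]).
  apply/seteqP; split => w /=; last by case=> -[/cylinder_update Kw Gw].
  move=> [Kw Gw]; case Xj : (X j w); [left|right]; split => // k;
    rewrite inE /update => /orP[/eqP->|kK]; rewrite ?eqxx //;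
    (case: eqP => [ekj|_]; [by move: jK; rewrite -ekj kK|by apply: Kw]).
split; first exact: measurableU.
rewrite measureU //; last first.
  apply/seteqP; split => w //= [[K1 _] [K2 _]].
  by move: (K1 j (mem_head _ _)) (K2 j (mem_head _ _)); rewrite /update eqxx => ->.
rewrite (congr2 (fun a b => (a + b)%E) e1 e2) -EFinD; congr (_%:E).
rewrite !big_cons /= /update eqxx !Kupdate; ring.
Qed.

Lemma probability_bmean (G : (I -> bool) -> bool) J c :
  uniq J -> depends_on J (fun c => (G c)%:R : R) ->
  measurable [set w | G (X^~ w)] /\
  P [set w | G (X^~ w)] = (bmean p J (fun c => (G c)%:R) c)%:E.
Proof.
move=> uJ dG; have := @probability_cylinderI G J [::] c.
rewrite cats0 big_nil mul1r => /(_ uJ dG).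
by rewrite (_ : cylinder [::] c `&` _ = [set w | G (X^~ w)]) //; apply/seteqP; split => w //= [].
Qed.

End BernoulliFamily.

Definition eqV (d : nat) (x y : V d) : bool := [forall i, x i == y i].

Lemma eqVP (d : nat) : Equality.axiom (@eqV d).
Proof. by move=> x y; apply: (iffP forallP) => [xy|->//]; apply: funext => i; apply/eqP. Qed.

HB.instance Definition _ (d : nat) := hasDecEq.Build (V d) (@eqVP d).

Section Lattice.
Variable d : nat.
Implicit Types (x y z : V d) (i : 'I_d) (b : bool).

Definition adjacent x y := exists i b, y = shift x i b.

Lemma shift_inj x y i b : shift x i b = shift y i b -> x = y.
Proof.
move=> e; apply: funext => j; have := congr1 (fun f => f j) e; rewrite /shift.
by case: (j == i) => // /addIr.
Qed.

Lemma shiftK x i b : shift (shift x i b) i (~~ b) = x.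
Proof.
by apply: funext => j; rewrite /shift; case: (j =P i) => // _; case: b => /=; ring.
Qed.

Lemma adjacent_sym x y : adjacent x y -> adjacent y x.
Proof. by move=> [i [b ->]]; exists i, (~~ b); rewrite shiftK. Qed.

Lemma norm1_bigD1 x i : norm1 x = (`|x i| + \sum_(j < d | j != i) `|x j|)%N.
Proof. by rewrite /norm1 (bigD1 i). Qed.

Lemma norm1_shift x i b : norm1 (shift x i b) =
  (`|shift x i b i| + \sum_(j < d | j != i) `|x j|)%N.
Proof.
rewrite (norm1_bigD1 _ i); congr (_ + _)%N.
by apply: eq_bigr => j ji; rewrite /shift (negbTE ji).
Qed.

Lemma norm1_adjacent x y : adjacent x y ->
  (norm1 y <= (norm1 x).+1)%N /\ (norm1 x <= (norm1 y).+1)%N.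
Proof. by move=> [i [b ->]]; rewrite norm1_shift (norm1_bigD1 x i) /shift eqxx; case: b; lia. Qed.

Lemma exists_shift_norm1S z : (0 < norm1 z)%N ->
  exists i b, norm1 (shift z i b) = (norm1 z).+1.
Proof.
move=> nz; have [i zi] : exists i, z i != 0%R.
  apply/not_existsP => z0; move: nz; rewrite /norm1 big1 // => i _.
  by have := z0 i; case: eqP => // ->.
exists i, (0 < z i)%R; rewrite norm1_shift (norm1_bigD1 z i) /shift eqxx.
by move: zi; case: (ltrP 0 (z i)) => h zi; lia.
Qed.

Lemma norm1_origin : norm1 (origin d) = 0%N.
Proof. by rewrite /norm1 big1. Qed.

Lemma bdryE n x : bdry d n x <-> norm1 x = n.+1.
Proof.
rewrite /bdry /ball1 /=; split; last by move=> ->; rewrite ltnn.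
by move=> [h1 /negP h2]; apply/eqP; rewrite eqn_leq h1 ltnNge.
Qed.

Lemma norm1_coord x i : (`|x i| <= norm1 x)%N.
Proof. by rewrite (norm1_bigD1 _ i) leq_addr. Qed.

Definition ball_seq (n : nat) : seq (V d) :=
  undup [seq x <- [seq (fun i => ((f i : nat)%:Z - n%:Z)%R : int)
                  | f : {ffun 'I_d -> 'I_(n.*2.+1)} <- enum {ffun 'I_d -> 'I_(n.*2.+1)}]
         | (norm1 x <= n)%N].

Lemma mem_ball_seq n x : (x \in ball_seq n) = (norm1 x <= n)%N.
Proof.
rewrite mem_undup mem_filter; apply/andP/idP => [[]//|hx]; split => //.
apply/mapP; exists [ffun i => inord (absz (x i + n%:Z)%R) : 'I_(n.*2.+1)].
  by rewrite mem_enum.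
by apply: funext => i; have xi := norm1_coord x i; rewrite ffunE inordK; lia.
Qed.

End Lattice.

Section Paths.
Variable d : nat.
Implicit Types (x y s : V d) (l W : seq (V d)) (S A : set (V d)).
Implicit Types (E : V d -> V d -> Prop).

Lemma chain_rcons E x l y : chain E x (rcons l y) <-> chain E x l /\ E (last x l) y.
Proof.
elim: l x => [|z l IH] x /=; first by split => [[]|[]].
by rewrite IH; split => [[? [? ?]]|[[? ?] ?]].
Qed.

Lemma chain_sub_in E E' W s l :
  (forall x y, x \in W -> y \in W -> E x y -> E' x y) ->
  s \in W -> all (mem W) l -> chain E s l -> chain E' s l.
Proof.
move=> EE'; elim: l s => [|y l IH] s //= sW /andP[yW lW] [Esy ch].
by split; [apply: EE'|apply: IH].
Qed.

Lemma chain_first_hit E : (forall x y, E x y -> adjacent x y) ->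
  forall l x k, chain E x l -> (norm1 x <= k)%N -> (k <= norm1 (last x l))%N ->
  exists l', [/\ chain E x l', norm1 (last x l') = k & all (fun y => norm1 y <= k)%N l'].
Proof.
move=> Eadj; elim => [|y l IH] x k /=.
  by move=> _ h1 h2; exists [::]; split => //; apply/eqP; rewrite eqn_leq h1 h2.
move=> [Exy ch] h1 h2.
case: (eqVneq (norm1 x) k) => [<-|ne]; first by exists [::].
have [hy _] := norm1_adjacent (Eadj _ _ Exy).
have [l' [c' e' a']] := IH y k ch (ltac:(lia) : (norm1 y <= k)%N) h2.
by exists (y :: l'); split => //=; rewrite (ltac:(lia) : (norm1 y <= k)%N).
Qed.

Lemma reaches_bdryS E n : (forall x y, E x y -> adjacent x y) ->
  reaches E (origin d) (bdry d n.+1) -> reaches E (origin d) (bdry d n).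
Proof.
move=> Eadj [l [ch /bdryE hl]].
have o_le : (norm1 (origin d) <= n.+1)%N by rewrite norm1_origin.
have [l' [ch' e' _]] := @chain_first_hit E Eadj l (origin d) n.+1 ch o_le
  (ltnW (eq_leq (esym hl))).
by exists l'; split => //; apply/bdryE.
Qed.

Lemma infinite_reachsetE E : (forall x y, E x y -> adjacent x y) ->
  ~ finite_set (reachset E (origin d)) <-> forall n, reaches E (origin d) (bdry d n).
Proof.
move=> Eadj; split.
  move=> infE n; apply/not_existsP => nr; apply: infE.
  apply: (@sub_finite_set _ _ [set` ball_seq d n]); last exact: finite_seq.
  move=> y [l [ch /= ey]]; rewrite /= mem_ball_seq leqNgt ey; apply/negP => hy.
  have o_le : (norm1 (origin d) <= n.+1)%N by rewrite norm1_origin.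
  have [l' [ch' e' _]] := @chain_first_hit E Eadj l (origin d) n.+1 ch o_le hy.
  by apply: (nr l'); split => //; apply/bdryE.
move=> reachE /finite_seqP [s es].
have [l [ch /bdryE hl]] := reachE (\max_(y <- s) norm1 y)%N.
have ls : [set` s] (last (origin d) l) by rewrite -es; exists l.
by have := @leq_bigmax_seq _ s predT (@norm1 d) _ ls erefl; rewrite hl ltnn.
Qed.

Definition reach_within E W S A :=
  exists s l, [/\ S s, s \in W, chain E s l, all (mem W) l & A (last s l)].

Lemma reaches_ball_seq E n : (forall x y, E x y -> adjacent x y) ->
  reaches E (origin d) (bdry d n) <->
  reach_within E (ball_seq d n.+1) [set origin d] (bdry d n).
Proof.
move=> Eadj; split; last by move=> [s [l [/= <- _ ch _ Al]]]; exists l.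
move=> [l [ch /bdryE hl]].
have o_le : (norm1 (origin d) <= n.+1)%N by rewrite norm1_origin.
have [l' [ch' e' a']] := chain_first_hit Eadj ch o_le (eq_leq (esym hl)).
exists (origin d), l'; split => //; first by rewrite mem_ball_seq norm1_origin.
  by apply/allP => y yl; rewrite /= mem_ball_seq (allP a' y yl).
exact/bdryE.
Qed.

Lemma reach_within_sub E E' W S A :
  (forall x y, x \in W -> y \in W -> E x y -> E' x y) ->
  reach_within E W S A -> reach_within E' W S A.
Proof.
move=> EE' [s [l [Ss sW ch lW As]]]; exists s, l; split => //.
exact: (chain_sub_in EE').
Qed.

Lemma reach_within_start E W S A :
  reach_within E W S A <-> exists y, S y /\ reach_within E W [set y] A.
Proof.
split; first by move=> [s [l [Ss sW ch lW As]]]; exists s; split => //; exists s, l.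
by move=> [y [Sy [s [l [/= -> sW ch lW As]]]]]; exists y, l.
Qed.

Definition unexplored W S := [seq x <- W | ~~ `[< S x >]].

Definition frontier E W S : set (V d) :=
  [set y | y \in unexplored W S /\ exists s, [/\ S s, s \in W & E s y]].

Lemma unexplored_sub W S x : x \in unexplored W S -> x \in W.
Proof. by rewrite mem_filter => /andP[]. Qed.

Lemma unexplored_notin W S x : x \in unexplored W S -> ~ S x.
Proof. by rewrite mem_filter => /andP[/asboolPn]. Qed.

Lemma mem_unexplored W S x : x \in W -> ~ S x -> x \in unexplored W S.
Proof. by move=> xW nS; rewrite mem_filter xW andbT; apply/asboolPn. Qed.

Lemma size_unexplored W S s : S s -> s \in W -> (size (unexplored W S) < size W)%N.
Proof.
move=> Ss sW; rewrite size_filter -(count_predC (fun x => ~~ `[< S x >]) W).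
rewrite -addn1 leq_add2l lt0n -lt0n -has_count; apply/hasP; exists s => //=.
by rewrite negbK; apply/asboolP.
Qed.

Lemma reach_within_frontier E W S A : (forall s, S s -> s \in W -> ~ A s) ->
  reach_within E W S A <-> reach_within E (unexplored W S) (frontier E W S) A.
Proof.
move=> nA; split; last first.
  move=> [y [l [[yWm [s [Ss sW Esy]]] _ ch lW Al]]].
  exists s, (y :: l); split => //=; rewrite (unexplored_sub yWm).
  by apply/allP => z /(allP lW) /unexplored_sub.
move=> [s [l [Ss sW ch lW As]]].
(* either the path avoids [S], or it leaves [S] for the last time into the frontier *)
suff : (~ S s /\ all (fun y => ~~ `[< S y >]) l) \/
       reach_within E (unexplored W S) (frontier E W S) A by case=> // -[].
elim: l s sW ch lW As {Ss} => [|y l IH] s sW /=.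
  by move=> _ _ As; left; split => // Ss; apply: (nA s).
move=> [Esy ch] /andP[yW lW] Al.
case: (IH y yW ch lW Al) => [[nSy alS]|]; last by right.
case: (asboolP (S s)) => Ss; last by left; split => //; rewrite alS andbT; apply/asboolPn.
right; exists y, l; split => //.
- by split; [exact: mem_unexplored|exists s].
- exact: mem_unexplored.
- by apply/allP => z zl; apply: mem_unexplored; [apply: (allP lW)|apply/asboolPn/(allP alS)].
Qed.

End Paths.

Lemma exploration_cases (d : nat) (W : seq (V d)) (S A : set (V d)) :
  [\/ exists s, [/\ S s, s \in W & A s],
      forall s, S s -> s \notin W |
      (forall s, S s -> s \in W -> ~ A s) /\ exists s, S s /\ s \in W].
Proof.
case: (pselect (exists s, [/\ S s, s \in W & A s])) => [|nA]; first by constructor 1.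
case: (pselect (exists s, S s /\ s \in W)) => [SW|nSW].
  by constructor 3; split => // s Ss sW As; apply: nA; exists s.
by constructor 2 => s Ss; apply/negP => sW; apply: nSW; exists s.
Qed.

Section Exploration.
Variables (R : realFieldType) (p : R) (d : nat) (A : set (V d)) (I : eqType).
Variable E : (I -> bool) -> V d -> V d -> Prop.
Variables (coords : seq (V d) -> seq I) (frontier_coords : seq (V d) -> set (V d) -> seq I).
Hypothesis coordsP : forall W c c', (forall j, j \in coords W -> c j = c' j) ->
  forall x y, x \in W -> y \in W -> E c x y -> E c' x y.
Hypothesis frontier_coords_sub : forall W S j, j \in frontier_coords W S -> j \in coords W.
Hypothesis coords_unexplored :
  forall W S j, j \in coords (unexplored W S) -> j \in coords W.
Hypothesis frontier_coords_fresh :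
  forall W S j, j \in frontier_coords W S -> j \notin coords (unexplored W S).
Hypothesis frontier_coordsP : forall W S c c',
  (forall j, j \in frontier_coords W S -> c j = c' j) -> frontier (E c) W S = frontier (E c') W S.

Definition cfalse : I -> bool := fun=> false.

Definition crossing_prob W S :=
  bmean p (coords W) (fun c => (`[< reach_within (E c) W S A >])%:R) cfalse.

Lemma reach_within_coords W S c c' : (forall j, j \in coords W -> c j = c' j) ->
  `[< reach_within (E c) W S A >] = `[< reach_within (E c') W S A >].
Proof.
move=> cc'; apply: asbool_equiv_eq; split; apply: reach_within_sub; apply: coordsP => //.
by move=> j jJ; rewrite cc'.
Qed.

Lemma crossing_probE W S c :
  bmean p (coords W) (fun c => (`[< reach_within (E c) W S A >])%:R) c = crossing_prob W S.
Proof.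
apply: (@bmean_depends _ p _ (coords W)) => [c1 c2 c12|i ->] //.
by rewrite (reach_within_coords _ c12).
Qed.

Lemma crossing_prob_hit W S : (exists s, [/\ S s, s \in W & A s]) -> crossing_prob W S = 1.
Proof.
move=> [s [Ss sW As]]; rewrite /crossing_prob (@eq_bmean _ _ _ _ _ (fun=> 1)) ?bmean_const //.
by move=> c; rewrite asboolT //; exists s, [::].
Qed.

Lemma crossing_prob_none W S : (forall s, S s -> s \notin W) -> crossing_prob W S = 0.
Proof.
move=> SW; rewrite /crossing_prob (@eq_bmean _ _ _ _ _ (fun=> 0)) ?bmean_const //.
by move=> c; rewrite asboolF // => -[s [l [Ss sW _ _ _]]]; move: (SW s Ss); rewrite sW.
Qed.

(* Conditioning on the coordinates deciding the frontier of [S]: the rest of the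
   exploration uses only fresh coordinates, inside the strictly smaller window. *)
Lemma crossing_prob_rec W S : (forall s, S s -> s \in W -> ~ A s) ->
  crossing_prob W S = bmean p (frontier_coords W S)
    (fun c => crossing_prob (unexplored W S) (frontier (E c) W S)) cfalse.
Proof.
move=> nA; rewrite /crossing_prob.
set F := fun c => (`[< reach_within (E c) (unexplored W S) (frontier (E c) W S) A >])%:R : R.
rewrite (@eq_bmean _ _ _ _ _ F); last first.
  by move=> c; rewrite /F (asbool_equiv_eq (reach_within_frontier (E c) nA)).
have dF : depends_on (frontier_coords W S ++ coords (unexplored W S)) F.
  move=> c c' cc'; rewrite /F (@frontier_coordsP W S c c'); last first.
    by move=> j jJ; apply: cc'; rewrite mem_cat jJ.
  by rewrite (@reach_within_coords _ _ c c') // => j jJ; apply: cc'; rewrite mem_cat jJ orbT.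
rewrite (@bmean_support _ p _ _ (coords W) (frontier_coords W S ++ coords (unexplored W S))
  F cfalse cfalse dF) //; last first.
  by move=> j; rewrite mem_cat => /orP[/frontier_coords_sub|/coords_unexplored].
rewrite bmean_cat; apply: eq_bmean => c.
apply: etrans (crossing_probE _ _ c); apply: eq_bmean_outside => c' c'c.
by rewrite /F (@frontier_coordsP W S c' c) // => j /frontier_coords_fresh /c'c.
Qed.

End Exploration.
Arguments cfalse {I}.

Section Models.
Variable d : nat.
Implicit Types (x y s : V d) (i : 'I_d) (b : bool) (W : seq (V d)) (S : set (V d)).

Definition aon_step (c : V d -> bool) := aon_edge (fun x (_ : unit) => c x) tt.
Definition site_step (c : V d -> bool) := site_edge (fun x (_ : unit) => c x) tt.
Definition dir_step (c : V d * 'I_d * bool -> bool) := dir_edge (fun e (_ : unit) => c e) tt.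
Definition bond_step (c : V d * 'I_d -> bool) := bond_edge (fun e (_ : unit) => c e) tt.

Lemma aon_step_adjacent c x y : aon_step c x y -> adjacent x y.
Proof. by case. Qed.

Lemma site_step_adjacent c x y : site_step c x y -> adjacent x y.
Proof. by case. Qed.

Lemma dir_step_adjacent c x y : dir_step c x y -> adjacent x y.
Proof. by move=> [i [b [-> _]]]; exists i, b. Qed.

Lemma bond_step_adjacent c x y : bond_step c x y -> adjacent x y.
Proof.
by move=> [i [[-> _]|[-> _]]]; [exists i, true|apply: adjacent_sym; exists i, true].
Qed.

Definition aon_coords W := W.
Definition aon_frontier_coords W S := undup [seq x <- W | `[< S x >]].

Lemma aon_coordsP W c c' : (forall j, j \in aon_coords W -> c j = c' j) ->
  forall x y, x \in W -> y \in W -> aon_step c x y -> aon_step c' x y.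
Proof. by move=> cc' x y xW yW [cx xy]; split => //; rewrite -cc'. Qed.

Lemma mem_aon_frontier_coords W S x : (x \in aon_frontier_coords W S) = (x \in W) && `[< S x >].
Proof. by rewrite mem_undup mem_filter andbC. Qed.

Lemma aon_frontier_coords_sub W S j : j \in aon_frontier_coords W S -> j \in aon_coords W.
Proof. by rewrite mem_aon_frontier_coords => /andP[]. Qed.

Lemma aon_coords_unexplored W S j : j \in aon_coords (unexplored W S) -> j \in aon_coords W.
Proof. exact: unexplored_sub. Qed.

Lemma aon_frontier_coords_fresh W S j :
  j \in aon_frontier_coords W S -> j \notin aon_coords (unexplored W S).
Proof.
by rewrite mem_aon_frontier_coords => /andP[_ /asboolP Sj]; apply/negP => /unexplored_notin.
Qed.

Lemma aon_frontier_coordsP W S c c' : (forall j, j \in aon_frontier_coords W S -> c j = c' j) ->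
  frontier (aon_step c) W S = frontier (aon_step c') W S.
Proof.
move=> cc'; apply/seteqP; split => y [yW [s [Ss sW [cs sy]]]]; split => //;
  exists s; (split => //; split => //); [rewrite -cc'|rewrite cc'] => //;
  by rewrite mem_aon_frontier_coords sW; apply/asboolP.
Qed.

Definition dir_coords W : seq (V d * 'I_d * bool) :=
  [seq e <- [seq (x, ib.1, ib.2) | x <- W, ib <- enum {: 'I_d * bool}]
   | shift e.1.1 e.1.2 e.2 \in W].
Definition dir_frontier_coords W S := undup [seq e <- dir_coords W |
  `[< S e.1.1 >] && ~~ `[< S (shift e.1.1 e.1.2 e.2) >]].

Lemma mem_dir_coords W x i b : ((x, i, b) \in dir_coords W) = (x \in W) && (shift x i b \in W).
Proof.
rewrite mem_filter /= andbC; congr (_ && _); apply/allpairsP/idP.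
  by move=> [[x' [i' b']] [/= x'W _ [-> _ _]]].
by move=> xW; exists (x, (i, b)); rewrite mem_enum.
Qed.

Lemma mem_dir_frontier_coords W S x i b : ((x, i, b) \in dir_frontier_coords W S) =
  [&& x \in W, shift x i b \in W, `[< S x >] & ~~ `[< S (shift x i b) >]].
Proof. by rewrite mem_undup mem_filter mem_dir_coords /= andbC -!andbA. Qed.

Lemma dir_coordsP W c c' : (forall j, j \in dir_coords W -> c j = c' j) ->
  forall x y, x \in W -> y \in W -> dir_step c x y -> dir_step c' x y.
Proof.
move=> cc' x y xW yW [i [b [ey ce]]]; exists i, b; split => //.
by rewrite -cc' // mem_dir_coords xW -ey yW.
Qed.

Lemma dir_frontier_coords_sub W S j : j \in dir_frontier_coords W S -> j \in dir_coords W.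
Proof. by rewrite mem_undup mem_filter => /andP[]. Qed.

Lemma dir_coords_unexplored W S j : j \in dir_coords (unexplored W S) -> j \in dir_coords W.
Proof.
by case: j => [[x i] b]; rewrite !mem_dir_coords => /andP[/unexplored_sub -> /unexplored_sub ->].
Qed.

Lemma dir_frontier_coords_fresh W S j :
  j \in dir_frontier_coords W S -> j \notin dir_coords (unexplored W S).
Proof.
case: j => [[x i] b]; rewrite mem_dir_frontier_coords mem_dir_coords => /and4P[_ _ /asboolP Sx _].
by apply/negP => /andP[/unexplored_notin].
Qed.

Lemma mem_dir_frontier_coords_step W S s i b : S s -> s \in W ->
  shift s i b \in unexplored W S -> (s, i, b) \in dir_frontier_coords W S.
Proof.
move=> Ss sW yWm; rewrite mem_dir_frontier_coords sW (unexplored_sub yWm) (asboolT Ss).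
by rewrite (asboolF (unexplored_notin yWm)).
Qed.

Lemma dir_frontier_step W S s y c : S s -> s \in W -> y \in unexplored W S ->
  dir_step c s y -> exists i b, [/\ y = shift s i b, c (s, i, b) &
    (s, i, b) \in dir_frontier_coords W S].
Proof.
move=> Ss sW yWm [i [b [ey ce]]]; exists i, b; split => //.
by apply: mem_dir_frontier_coords_step; rewrite -?ey.
Qed.

Lemma dir_frontier_coordsP W S c c' : (forall j, j \in dir_frontier_coords W S -> c j = c' j) ->
  frontier (dir_step c) W S = frontier (dir_step c') W S.
Proof.
move=> cc'; suff sub c1 c2 : (forall j, j \in dir_frontier_coords W S -> c1 j = c2 j) ->
    frontier (dir_step c1) W S `<=` frontier (dir_step c2) W S.
  by apply/seteqP; split; apply: sub => // j /cc' ->.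
move=> c12 y [yWm [s [Ss sW sy]]]; split => //; exists s; split => //.
have [i [b [ey ce mem]]] := dir_frontier_step Ss sW yWm sy.
by exists i, b; rewrite -c12.
Qed.

Definition bond_coords W : seq (V d * 'I_d) :=
  [seq e <- [seq (x, i) | x <- W, i <- enum 'I_d] | shift e.1 e.2 true \in W].
Definition bond_frontier_coords W S := undup [seq e <- bond_coords W |
  `[< S e.1 >] != `[< S (shift e.1 e.2 true) >]].

Lemma mem_bond_coords W x i : ((x, i) \in bond_coords W) = (x \in W) && (shift x i true \in W).
Proof.
rewrite mem_filter /= andbC; congr (_ && _); apply/allpairsP/idP.
  by move=> [[x' i'] [/= x'W _ [-> _]]].
by move=> xW; exists (x, i); rewrite mem_enum.
Qed.

Lemma mem_bond_frontier_coords W S x i : ((x, i) \in bond_frontier_coords W S) =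
  [&& x \in W, shift x i true \in W & `[< S x >] != `[< S (shift x i true) >]].
Proof. by rewrite mem_undup mem_filter mem_bond_coords /= andbC andbA. Qed.

Lemma bond_coordsP W c c' : (forall j, j \in bond_coords W -> c j = c' j) ->
  forall x y, x \in W -> y \in W -> bond_step c x y -> bond_step c' x y.
Proof.
move=> cc' x y xW yW [i [[ey ce]|[ex ce]]]; exists i; [left|right]; split => //.
  by rewrite -cc' // mem_bond_coords xW -ey yW.
by rewrite -cc' // mem_bond_coords yW -ex xW.
Qed.

Lemma bond_frontier_coords_sub W S j : j \in bond_frontier_coords W S -> j \in bond_coords W.
Proof. by rewrite mem_undup mem_filter => /andP[]. Qed.

Lemma bond_coords_unexplored W S j : j \in bond_coords (unexplored W S) -> j \in bond_coords W.
Proof.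
by case: j => [x i]; rewrite !mem_bond_coords => /andP[/unexplored_sub -> /unexplored_sub ->].
Qed.

Lemma bond_frontier_coords_fresh W S j :
  j \in bond_frontier_coords W S -> j \notin bond_coords (unexplored W S).
Proof.
case: j => [x i]; rewrite mem_bond_frontier_coords mem_bond_coords => /and3P[_ _].
by apply: contraL => /andP[/unexplored_notin/asboolF -> /unexplored_notin/asboolF ->].
Qed.

Lemma bond_frontier_step W S s y c : S s -> s \in W -> y \in unexplored W S ->
  bond_step c s y -> exists i,
    (y = shift s i true /\ c (s, i) /\ (s, i) \in bond_frontier_coords W S) \/
    (s = shift y i true /\ c (y, i) /\ (y, i) \in bond_frontier_coords W S).
Proof.
move=> Ss sW yWm [i sy]; exists i; have yW := unexplored_sub yWm.
have nSy := asboolF (unexplored_notin yWm).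
case: sy => [[ey ce]|[es ce]]; [left|right]; do 2!split => //.
  by rewrite mem_bond_frontier_coords sW -ey yW (asboolT Ss) nSy.
by rewrite mem_bond_frontier_coords yW -es sW (asboolT Ss) nSy.
Qed.

Lemma bond_frontier_coordsP W S c c' : (forall j, j \in bond_frontier_coords W S -> c j = c' j) ->
  frontier (bond_step c) W S = frontier (bond_step c') W S.
Proof.
move=> cc'; suff sub c1 c2 : (forall j, j \in bond_frontier_coords W S -> c1 j = c2 j) ->
    frontier (bond_step c1) W S `<=` frontier (bond_step c2) W S.
  by apply/seteqP; split; apply: sub => // j /cc' ->.
move=> c12 y [yWm [s [Ss sW sy]]]; split => //; exists s; split => //.
have [i [[ey [ce mem]]|[es [ce mem]]]] := bond_frontier_step Ss sW yWm sy; exists i.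
  by left; rewrite -c12.
by right; rewrite -c12.
Qed.

End Models.

Section Comparison.
Variables (R : realFieldType) (p : R) (d : nat) (A : set (V d)).
Implicit Types (x y s : V d) (W : seq (V d)) (S : set (V d)).

Definition aon_crossing := crossing_prob p A (@aon_step d) (@aon_coords d).
Definition dir_crossing := crossing_prob p A (@dir_step d) (@dir_coords d).
Definition bond_crossing := crossing_prob p A (@bond_step d) (@bond_coords d).

Lemma aon_crossing_rec W S : (forall s, S s -> s \in W -> ~ A s) ->
  aon_crossing W S = bmean p (aon_frontier_coords W S)
    (fun c => aon_crossing (unexplored W S) (frontier (aon_step c) W S)) cfalse.
Proof.
exact: crossing_prob_rec (@aon_coordsP d) (@aon_frontier_coords_sub d)
  (@aon_coords_unexplored d) (@aon_frontier_coords_fresh d) (@aon_frontier_coordsP d) _ _.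
Qed.

Lemma dir_crossing_rec W S : (forall s, S s -> s \in W -> ~ A s) ->
  dir_crossing W S = bmean p (dir_frontier_coords W S)
    (fun c => dir_crossing (unexplored W S) (frontier (dir_step c) W S)) cfalse.
Proof.
exact: crossing_prob_rec (@dir_coordsP d) (@dir_frontier_coords_sub d)
  (@dir_coords_unexplored d) (@dir_frontier_coords_fresh d) (@dir_frontier_coordsP d) _ _.
Qed.

Lemma bond_crossing_rec W S : (forall s, S s -> s \in W -> ~ A s) ->
  bond_crossing W S = bmean p (bond_frontier_coords W S)
    (fun c => bond_crossing (unexplored W S) (frontier (bond_step c) W S)) cfalse.
Proof.
exact: crossing_prob_rec (@bond_coordsP d) (@bond_frontier_coords_sub d)
  (@bond_coords_unexplored d) (@bond_frontier_coords_fresh d) (@bond_frontier_coordsP d) _ _.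
Qed.

(* A directed edge leaving the explored set is identified with the undirected
   edge it traverses, encoded by its lower endpoint. *)
Definition undirect (e : V d * 'I_d * bool) : V d * 'I_d :=
  if e.2 then (e.1.1, e.1.2) else (shift e.1.1 e.1.2 false, e.1.2).

Lemma undirect_inj W S : {in dir_frontier_coords W S &, injective undirect}.
Proof.
move=> [[x i] b] [[x' i'] b']; rewrite !mem_dir_frontier_coords /undirect /=.
move=> /and4P[_ _ Sx nSx] /and4P[_ _ Sx' nSx'].
case: b Sx nSx => Sx nSx; case: b' Sx' nSx' => Sx' nSx' [ex ei]; subst i'.
- by rewrite ex.
- by move: nSx; rewrite ex (shiftK _ _ false) Sx'.
- by move: nSx'; rewrite -ex (shiftK _ _ false) Sx.
- by rewrite (shift_inj ex).
Qed.

Lemma bond_frontier_coords_undirect W S :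
  {subset bond_frontier_coords W S <= map undirect (dir_frontier_coords W S)}.
Proof.
move=> [x i]; rewrite mem_bond_frontier_coords => /and3P[xW sW].
case Sx : `[< S x >] => /= nS.
  apply/mapP; exists (x, i, true) => //.
  by rewrite mem_dir_frontier_coords xW sW Sx; case: `[< _ >] nS.
apply/mapP; exists (shift x i true, i, false); last by rewrite /undirect /= (shiftK _ _ true).
by rewrite mem_dir_frontier_coords sW (shiftK _ _ true) xW Sx; case: `[< _ >] nS.
Qed.

Lemma frontier_dir_bond W S c1 c2 :
  (forall j, j \in dir_frontier_coords W S -> c1 j = c2 (undirect j)) ->
  frontier (dir_step c1) W S = frontier (bond_step c2) W S.
Proof.
move=> c12; apply/seteqP; split => y [yWm [s [Ss sW sy]]]; split => //; exists s; split => //.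
  have [i [b [ey ce mem]]] := dir_frontier_step Ss sW yWm sy.
  exists i; move: ce; rewrite c12 // /undirect /=; case: b ey {mem} => ey ce; first by left.
  by right; rewrite ey (shiftK _ _ false).
have [i' [[ey [ce _]]|[es [ce _]]]] := bond_frontier_step Ss sW yWm sy.
  by exists i', true; rewrite c12 // mem_dir_frontier_coords_step -?ey.
have ey : y = shift s i' false by rewrite es (shiftK _ _ true).
by exists i', false; rewrite c12 ?mem_dir_frontier_coords_step -?ey // /undirect /= -ey.
Qed.

Lemma dir_crossing_eq_bond n W S : (size W < n)%N -> dir_crossing W S = bond_crossing W S.
Proof.
elim: n W S => [//|n IH] W S sizeW.
case: (exploration_cases W S A) => [hit|miss|[nA [s [Ss sW]]]].
- by rewrite /dir_crossing /bond_crossing !crossing_prob_hit.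
- by rewrite /dir_crossing /bond_crossing !crossing_prob_none.
have size_unexplored_n : (size (unexplored W S) < n)%N.
  by have := size_unexplored Ss sW; lia.
rewrite dir_crossing_rec // bond_crossing_rec //.
under eq_bmean do rewrite IH //.
rewrite (@bmean_transfer _ p _ _ (dir_frontier_coords W S) undirect _
  (fun c => bond_crossing (unexplored W S) (frontier (bond_step c) W S))
  (undup_uniq _) (@undirect_inj W S) _ (dir_frontier_coords W S) cfalse cfalse (undup_uniq _)) //;
  last by move=> c1 c2 c12; rewrite (frontier_dir_bond c12).
apply: (@bmean_support _ _ _ (bond_frontier_coords W S)) => //;
  last exact: bond_frontier_coords_undirect.
by move=> c c' cc'; rewrite (bond_frontier_coordsP cc').
Qed.

Hypotheses (p0 : 0 <= p) (p1 : p <= 1).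

(* Given what lies beyond the frontier, the frontier meets a target set [Y] with
   probability [1 - (1 - p) ^ k], where [k] counts the explored vertices next to
   [Y] (all-or-none) or the explored edges into [Y] (directed bonds). *)
Lemma aon_frontier_meet_le_dir W S (Y : set (V d)) :
  bmean p (aon_frontier_coords W S)
    (fun c => (`[< exists y, frontier (aon_step c) W S y /\ Y y >])%:R) cfalse <=
  bmean p (dir_frontier_coords W S)
    (fun c => (`[< exists y, frontier (dir_step c) W S y /\ Y y >])%:R) cfalse.
Proof.
pose Ta := [seq s <- aon_frontier_coords W S |
  `[< exists y, [/\ y \in unexplored W S, Y y & adjacent s y] >]].
pose Td := [seq e <- dir_frontier_coords W S | `[< Y (shift e.1.1 e.1.2 e.2) >]].
have uTa : uniq Ta by rewrite filter_uniq // undup_uniq.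
have uTd : uniq Td by rewrite filter_uniq // undup_uniq.
have memTa s : (s \in Ta) = [&& s \in W, `[< S s >] &
    `[< exists y, [/\ y \in unexplored W S, Y y & adjacent s y] >]].
  by rewrite mem_filter mem_aon_frontier_coords andbC -andbA.
have frontierTa c : `[< exists y, frontier (aon_step c) W S y /\ Y y >] = has c Ta.
  apply/asboolP/hasP => [[y [[yWm [s [Ss sW [cs sy]]]] Yy]]|[s]].
    by exists s; rewrite // memTa (asboolT Ss) sW /=; apply/asboolP; exists y.
  rewrite memTa => /and3P[sW /asboolP Ss /asboolP [y [yWm Yy sy]]] cs.
  by exists y; split => //; split => //; exists s.
have frontierTd c : `[< exists y, frontier (dir_step c) W S y /\ Y y >] = has c Td.
  apply/asboolP/hasP => [[y [[yWm [s [Ss sW sy]]] Yy]]|[[[s i] b]]].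
    have [i [b [ey ce mem]]] := dir_frontier_step Ss sW yWm sy.
    by exists (s, i, b) => //; rewrite mem_filter mem andbT; apply/asboolP; rewrite -ey.
  rewrite mem_filter mem_dir_frontier_coords => /andP[/asboolP Yy].
  move=> /and4P[sW yW /asboolP Ss /asboolPn nSy] ce.
  exists (shift s i b); split => //; split; first exact: mem_unexplored.
  by exists s; split => //; exists i, b.
rewrite (@eq_bmean _ _ _ _ _ (fun c => (has c Ta)%:R)); last by move=> c; rewrite frontierTa.
rewrite [X in _ <= X](@eq_bmean _ _ _ _ _ (fun c => (has c Td)%:R));
  last by move=> c; rewrite frontierTd.
rewrite !bmean_has_sub // => [|x|x]; try by rewrite mem_filter => /andP[].
apply: lerB => //.
apply: ler_wiXn2l; rewrite ?subr_ge0 ?lerBlDr ?lerDl //.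
rewrite -(size_map (fun e : V d * 'I_d * bool => e.1.1) Td); apply: uniq_leq_size => // s.
rewrite memTa => /and3P[sW /asboolP Ss /asboolP [y [yWm Yy sy]]].
move: sy => [i [b ey]]; apply/mapP; exists (s, i, b) => //.
by rewrite mem_filter mem_dir_frontier_coords_step -?ey // andbT; apply/asboolP.
Qed.

Lemma aon_explore_le_dir W S :
  bmean p (aon_frontier_coords W S)
    (fun c => dir_crossing (unexplored W S) (frontier (aon_step c) W S)) cfalse <=
  bmean p (dir_frontier_coords W S)
    (fun c => dir_crossing (unexplored W S) (frontier (dir_step c) W S)) cfalse.
Proof.
set W' := unexplored W S.
pose from c' : set (V d) := [set y | reach_within (dir_step c') W' [set y] A].
have dir_crossingE N : dir_crossing W' N =
    bmean p (dir_coords W') (fun c' => (`[< exists y, N y /\ from c' y >])%:R) cfalse.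
  by apply: eq_bmean => c'; rewrite (asbool_equiv_eq (reach_within_start _ _ _ _)).
under eq_bmean do rewrite dir_crossingE.
under [X in _ <= X]eq_bmean do rewrite dir_crossingE.
rewrite bmean_exchange [X in _ <= X]bmean_exchange.
by apply: ler_bmean => // c'; apply: aon_frontier_meet_le_dir.
Qed.

Lemma aon_crossing_le_dir n W S : (size W < n)%N -> aon_crossing W S <= dir_crossing W S.
Proof.
elim: n W S => [//|n IH] W S sizeW.
case: (exploration_cases W S A) => [hit|miss|[nA [s [Ss sW]]]].
- by rewrite /aon_crossing /dir_crossing !crossing_prob_hit.
- by rewrite /aon_crossing /dir_crossing !crossing_prob_none.
rewrite aon_crossing_rec // dir_crossing_rec //; apply: le_trans (aon_explore_le_dir W S).
apply: ler_bmean => // c; apply: IH.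
by have := size_unexplored Ss sW; lia.
Qed.

End Comparison.

Section SiteAllOrNone.
Variable d : nat.
Implicit Types (x : V d) (l : seq (V d)) (c : V d -> bool).

Lemma aon_chain_site c x l : chain (aon_step c) x l -> l != [::] ->
  c x /\ exists l', chain (site_step c) x l' /\ adjacent (last x l') (last x l).
Proof.
elim: l x => [//|y l IH] x /= [[cx xy] ch] _; split => //.
case: (eqVneq l [::]) => [->|ne]; first by exists [::].
have [cy [l' [ch' adj']]] := IH y ch ne.
by exists (y :: l'); do !split.
Qed.

Lemma site_chain_aon c x l : c x -> chain (site_step c) x l ->
  chain (aon_step c) x l /\ c (last x l).
Proof.
elim: l x => [//|y l IH] x /= cx [[xy cy] ch].
by have [ch' cl] := IH y cy ch; do !split.
Qed.

(* An open path of sites ending on the sphere of radius [n + 1] is the same as a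
   path of all-or-none steps out of open vertices ending one step further out:
   the last step leaves the last open site in any outward direction. *)
Lemma aon_reach_bdryS c n :
  reaches (aon_step c) (origin d) (bdry d n.+1) <->
  c (origin d) /\ reaches (site_step c) (origin d) (bdry d n).
Proof.
split.
  move=> [l [ch /bdryE hl]].
  have ne : l != [::] by case: l ch hl => //=; rewrite norm1_origin.
  have [co [l' [ch' adj']]] := aon_chain_site ch ne; split => //.
  have [last_le _] := norm1_adjacent adj'; rewrite hl in last_le.
  have o_le : (norm1 (origin d) <= n.+1)%N by rewrite norm1_origin.
  have [l'' [ch'' e'' _]] := chain_first_hit (@site_step_adjacent d c) ch' o_le last_le.
  by exists l''; split => //; apply/bdryE.
move=> [co [l [ch /bdryE hl]]].
have [ch' cl] := site_chain_aon co ch.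
have [i [b e]] : exists i b, norm1 (shift (last (origin d) l) i b) = (norm1 (last (origin d) l)).+1.
  by apply: exists_shift_norm1S; rewrite hl.
exists (rcons l (shift (last (origin d) l) i b)); split.
  by apply/chain_rcons; split => //; split => //; exists i, b.
by apply/bdryE; rewrite last_rcons e hl.
Qed.

Variables (T : Type) (S : V d -> T -> bool).

Lemma site_reachE n : site_reach S (bdry d n) = aon_reach S (bdry d n.+1).
Proof. by apply/seteqP; split => w /aon_reach_bdryS. Qed.

Lemma site_infE : site_inf S = aon_inf S.
Proof.
have aon_infE w : aon_inf S w <-> forall n, aon_reach S (bdry d n.+1) w.
  apply: (iff_trans (infinite_reachsetE (@aon_step_adjacent d (S^~ w)))).
  split => reachS n; first exact: reachS.
  exact: (reaches_bdryS (@aon_step_adjacent d (S^~ w)) (reachS n)).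
apply/seteqP; split => w; [move=> infS; apply/aon_infE => n|move=> /aon_infE reachS finS].
  rewrite -site_reachE /site_reach /=.
  have So : S (origin d) w.
    by apply/negP => So; apply: infS; apply: sub_finite_set (finite_set0 _) => y [].
  split => //; move: n; apply: (infinite_reachsetE (@site_step_adjacent d (S^~ w))).1 => finR.
  by apply: infS; apply: sub_finite_set finR => y [].
have [So _] : site_reach S (bdry d 0) w by rewrite site_reachE; apply: reachS.
apply: (infinite_reachsetE (@site_step_adjacent d (S^~ w))).2.
  by move=> n; have := reachS n; rewrite -site_reachE => -[].
by apply: sub_finite_set finS => y reach_y; split.
Qed.

End SiteAllOrNone.

Lemma cvg_probability_bigcap (R : realType) (dT : measure_display) (T : measurableType dT)
    (P : probability T R) (F : nat -> set T) :
  (forall n, measurable (F n)) -> (forall n, F n.+1 `<=` F n) ->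
  (fun n => P (F n)) @ \oo --> P (\bigcap_n F n).
Proof.
move=> mF decrF; apply: nonincreasing_cvg_mu => //.
- by apply: (@le_lt_trans _ _ 1%E); [apply: probability_le1|apply: ltry].
- exact: bigcapT_measurable.
- by apply/nonincreasing_seqP => n; rewrite subsetEset; apply: decrF.
Qed.

Section Percolation.
Variables (R : realType) (p : R) (d : nat).
Variables (dT : measure_display) (T : measurableType dT) (P : probability T R).
Variables (I : eqType) (X : I -> T -> bool).
Hypothesis hX : iid_bernoulli P X p.
Variable E : (I -> bool) -> V d -> V d -> Prop.
Variable coords : seq (V d) -> seq I.
Hypothesis coordsP : forall W c c', (forall j, j \in coords W -> c j = c' j) ->
  forall x y, x \in W -> y \in W -> E c x y -> E c' x y.
Hypothesis E_adjacent : forall c x y, E c x y -> adjacent x y.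

Definition crossing n := [set w | reaches (E (X^~ w)) (origin d) (bdry d n)].

Lemma crossing_measurable_prob n : measurable (crossing n) /\
  P (crossing n) = (crossing_prob p (bdry d n) E coords (ball_seq d n.+1) [set origin d])%:E.
Proof.
pose G c := `[< reach_within (E c) (ball_seq d n.+1) [set origin d] (bdry d n) >].
have -> : crossing n = [set w | G (X^~ w)].
  apply/seteqP; split => w /=; rewrite /G.
    by move=> /(reaches_ball_seq _ (@E_adjacent _)) /asboolP.
  by move=> /asboolP /(reaches_ball_seq _ (@E_adjacent _)).
have dG : depends_on (undup (coords (ball_seq d n.+1))) (fun c => (G c)%:R : R).
  move=> c c' cc'; rewrite /G (@reach_within_coords _ _ _ _ _ coordsP _ _ c c') // => j jJ.
  by apply: cc'; rewrite mem_undup.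
have [m ->] := probability_bmean hX cfalse (undup_uniq _) dG.
by split => //; rewrite /crossing_prob -bmean_undup.
Qed.

Lemma cvg_crossing :
  (fun n => P (crossing n)) @ \oo -->
  P [set w | ~ finite_set (reachset (E (X^~ w)) (origin d))].
Proof.
have -> : [set w | ~ finite_set (reachset (E (X^~ w)) (origin d))] = \bigcap_n crossing n.
  apply/seteqP; split => w /=.
    by move=> infw n _; exact: (infinite_reachsetE (@E_adjacent (X^~ w))).1 infw n.
  by move=> reachw; apply: (infinite_reachsetE (@E_adjacent (X^~ w))).2 => n; apply: reachw.
apply: cvg_probability_bigcap => n; first by case: (crossing_measurable_prob n).
by move=> w; apply: reaches_bdryS (@E_adjacent (X^~ w)).
Qed.

End Percolation.

Lemma le_probability_infinite (R : realType) (p : R) (d : nat)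
    (dT1 : measure_display) (T1 : measurableType dT1) (P1 : probability T1 R)
    (I1 : eqType) (X1 : I1 -> T1 -> bool) (E1 : (I1 -> bool) -> V d -> V d -> Prop)
    (coords1 : seq (V d) -> seq I1)
    (dT2 : measure_display) (T2 : measurableType dT2) (P2 : probability T2 R)
    (I2 : eqType) (X2 : I2 -> T2 -> bool) (E2 : (I2 -> bool) -> V d -> V d -> Prop)
    (coords2 : seq (V d) -> seq I2) :
  iid_bernoulli P1 X1 p -> iid_bernoulli P2 X2 p ->
  (forall W c c', (forall j, j \in coords1 W -> c j = c' j) ->
    forall x y, x \in W -> y \in W -> E1 c x y -> E1 c' x y) ->
  (forall W c c', (forall j, j \in coords2 W -> c j = c' j) ->
    forall x y, x \in W -> y \in W -> E2 c x y -> E2 c' x y) ->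
  (forall c x y, E1 c x y -> adjacent x y) -> (forall c x y, E2 c x y -> adjacent x y) ->
  (forall n, crossing_prob p (bdry d n) E1 coords1 (ball_seq d n.+1) [set origin d] <=
             crossing_prob p (bdry d n) E2 coords2 (ball_seq d n.+1) [set origin d]) ->
  (P1 [set w | ~ finite_set (reachset (E1 (X1^~ w)) (origin d))] <=
   P2 [set w | ~ finite_set (reachset (E2 (X2^~ w)) (origin d))])%E.
Proof.
move=> hX1 hX2 coords1P coords2P E1adj E2adj le12.
have cvg1 := cvg_crossing hX1 coords1P E1adj.
have cvg2 := cvg_crossing hX2 coords2P E2adj.
rewrite -(cvg_lim (@ereal_hausdorff R) cvg1) -(cvg_lim (@ereal_hausdorff R) cvg2).
apply: lee_lim; [exact: cvgP cvg1|exact: cvgP cvg2|].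
apply: nearW => n; have [_ ->] := crossing_measurable_prob hX1 coords1P E1adj n.
by have [_ ->] := crossing_measurable_prob hX2 coords2P E2adj n; rewrite lee_fin.
Qed.

Lemma eq_probability_crossing (R : realType) (p : R) (d : nat)
    (dT1 : measure_display) (T1 : measurableType dT1) (P1 : probability T1 R)
    (dT2 : measure_display) (T2 : measurableType dT2) (P2 : probability T2 R)
    (I : eqType) (X1 : I -> T1 -> bool) (X2 : I -> T2 -> bool)
    (E : (I -> bool) -> V d -> V d -> Prop) (coords : seq (V d) -> seq I) n :
  iid_bernoulli P1 X1 p -> iid_bernoulli P2 X2 p ->
  (forall W c c', (forall j, j \in coords W -> c j = c' j) ->
    forall x y, x \in W -> y \in W -> E c x y -> E c' x y) ->
  (forall c x y, E c x y -> adjacent x y) ->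
  P1 (crossing X1 E n) = P2 (crossing X2 E n).
Proof.
move=> hX1 hX2 coordsP Eadj.
by have [_ ->] := crossing_measurable_prob hX1 coordsP Eadj n;
   have [_ ->] := crossing_measurable_prob hX2 coordsP Eadj n.
Qed.

Lemma eq_probability_infinite (R : realType) (p : R) (d : nat)
    (dT1 : measure_display) (T1 : measurableType dT1) (P1 : probability T1 R)
    (I1 : eqType) (X1 : I1 -> T1 -> bool) (E1 : (I1 -> bool) -> V d -> V d -> Prop)
    (coords1 : seq (V d) -> seq I1)
    (dT2 : measure_display) (T2 : measurableType dT2) (P2 : probability T2 R)
    (I2 : eqType) (X2 : I2 -> T2 -> bool) (E2 : (I2 -> bool) -> V d -> V d -> Prop)
    (coords2 : seq (V d) -> seq I2) :
  iid_bernoulli P1 X1 p -> iid_bernoulli P2 X2 p ->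
  (forall W c c', (forall j, j \in coords1 W -> c j = c' j) ->
    forall x y, x \in W -> y \in W -> E1 c x y -> E1 c' x y) ->
  (forall W c c', (forall j, j \in coords2 W -> c j = c' j) ->
    forall x y, x \in W -> y \in W -> E2 c x y -> E2 c' x y) ->
  (forall c x y, E1 c x y -> adjacent x y) -> (forall c x y, E2 c x y -> adjacent x y) ->
  (forall n, crossing_prob p (bdry d n) E1 coords1 (ball_seq d n.+1) [set origin d] =
             crossing_prob p (bdry d n) E2 coords2 (ball_seq d n.+1) [set origin d]) ->
  P1 [set w | ~ finite_set (reachset (E1 (X1^~ w)) (origin d))] =
  P2 [set w | ~ finite_set (reachset (E2 (X2^~ w)) (origin d))].
Proof.
move=> hX1 hX2 coords1P coords2P E1adj E2adj eq12; apply/le_anti/andP; split.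
  by apply: (le_probability_infinite hX1 hX2 coords1P coords2P E1adj E2adj) => n; rewrite eq12.
by apply: (le_probability_infinite hX2 hX1 coords2P coords1P E2adj E1adj) => n; rewrite eq12.
Qed.

Theorem mainTheorem8 (R : realType) (d : nat) (p : R)
  (hp0 : 0 < p) (hp1 : p < 1)
  (d1 : measure_display) (T1 : measurableType d1) (Paon : probability T1 R)
  (X : V d -> T1 -> bool) (hX : iid_bernoulli Paon X p)
  (d2 : measure_display) (T2 : measurableType d2) (Psite : probability T2 R)
  (S : V d -> T2 -> bool) (hS : iid_bernoulli Psite S p)
  (d3 : measure_display) (T3 : measurableType d3) (Pdir : probability T3 R)
  (Y : V d * 'I_d * bool -> T3 -> bool) (hY : iid_bernoulli Pdir Y p)
  (d4 : measure_display) (T4 : measurableType d4) (Pbond : probability T4 R)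
  (Z : V d * 'I_d -> T4 -> bool) (hZ : iid_bernoulli Pbond Z p) :
  (forall n : nat,
     Paon (aon_reach X (bdry d n.+1)) = Psite (site_reach S (bdry d n))) /\
  Psite (site_inf S) = Paon (aon_inf X) /\
  (Paon (aon_inf X) <= Pdir (dir_inf Y))%E /\
  Pdir (dir_inf Y) = Pbond (bond_inf Z).
Proof.
have p0 : 0 <= p := ltW hp0.
have p1 : p <= 1 := ltW hp1.
have aonP := @aon_coordsP d; have aon_adj := @aon_step_adjacent d.
have dirP := @dir_coordsP d; have dir_adj := @dir_step_adjacent d.
have bondP := @bond_coordsP d; have bond_adj := @bond_step_adjacent d.
split => [n|].
  by rewrite site_reachE; exact: (eq_probability_crossing _ hX hS aonP aon_adj).
split; first by rewrite site_infE; exact: (eq_probability_infinite hS hX aonP aonP).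
split.
  exact: (le_probability_infinite hX hY aonP dirP aon_adj dir_adj
           (fun n => aon_crossing_le_dir (bdry d n) p0 p1 _ (ltnSn _))).
exact: (eq_probability_infinite hY hZ dirP bondP dir_adj bond_adj
         (fun n => dir_crossing_eq_bond p (bdry d n) _ (ltnSn _))).
Qed.
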